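(* Let $M$ be a positive integer and $q\in\overline{\mathcal U}\setminus\{M+1\}$. Then for every $\varepsilon>0$ there exists $\delta>0$ such that \[\dim_H\big(\overline{\mathcal U}\cap(q-\delta,q+\delta)\big)\le(1+\varepsilon)\dim_H\pi_{q+\delta}(\mathbf U_\delta(q)),\] where $\mathbf U_\delta(q)=\{\alpha(p):p\in\overline{\mathcal U}\cap(q-\delta,q+\delta)\}$.
   Context: Fix a positive integer $M$; all sequences have digits in $\{0,1,\dots,M\}$. For $r>1$ put $\pi_r((x_i))=\sum_{i\ge1}x_ir^{-i}$. $\mathcal U$ is the set of $q\in(1,M+1]$ such that $1$ has exactly one sequence $(x_i)$ with $\pi_q((x_i))=1$, and $\overline{\mathcal U}$ is its closure. For $p\in(1,M+1]$, $\alpha(p)$ is the quasi-greedy $p$-expansion of $1$, i.e. the lexicographically largest sequence not ending in $0^\infty$ with $\pi_p=1$. *)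

From Stdlib Require Import Reals Lra.
From Coquelicot Require Import Coquelicot.
Open Scope R_scope.

(* A digit sequence (x_i)_{i>=1} is represented by x : nat -> nat, where
   x k stands for x_{k+1}.  Digits lie in {0,...,M}. *)
Definition digits (M : nat) (x : nat -> nat) : Prop := forall k, (x k <= M)%nat.

Definition pi (r : R) (x : nat -> nat) : R :=
  Series (fun k => INR (x k) / r ^ (S k)).

Definition U (M : nat) (q : R) : Prop :=
  1 < q <= INR M + 1 /\
  exists x, (digits M x /\ pi q x = 1) /\
    forall y, digits M y -> pi q y = 1 -> y = x.

Definition Ubar (M : nat) (q : R) : Prop :=
  forall e, 0 < e -> exists u, U M u /\ Rabs (u - q) < e.

Definition lex_le (y x : nat -> nat) : Prop :=
  y = x \/ exists n, (forall k, (k < n)%nat -> y k = x k) /\ (y n < x n)%nat.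

Definition not_ending_in_zeros (x : nat -> nat) : Prop :=
  forall n, exists k, (n <= k)%nat /\ x k <> 0%nat.

Definition quasi_greedy (M : nat) (p : R) (a : nat -> nat) : Prop :=
  digits M a /\ not_ending_in_zeros a /\ pi p a = 1 /\
  forall b, digits M b -> not_ending_in_zeros b -> pi p b = 1 -> lex_le b a.

Definition Udelta (M : nat) (delta q : R) (a : nat -> nat) : Prop :=
  exists p, Ubar M p /\ q - delta < p < q + delta /\ quasi_greedy M p a.

Definition pi_image (r : R) (S : (nat -> nat) -> Prop) (y : R) : Prop :=
  exists x, S x /\ y = pi r x.

(* For subsets of R we cover by
   nondegenerate closed intervals [a_i, b_i] (any set of diameter d lies in
   a closed interval of length d, and can be enlarged slightly). *)
Definition H_null (s : R) (E : R -> Prop) : Prop :=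
  forall eta eps, 0 < eta -> 0 < eps ->
    exists a b : nat -> R,
      (forall i, a i < b i /\ b i - a i <= eta) /\
      (forall x, E x -> exists i, a i <= x <= b i) /\
      (forall n, sum_n (fun i => Rpower (b i - a i) s) n <= eps).

Definition hdim (E : R -> Prop) : Rbar :=
  Glb_Rbar (fun s => 0 <= s /\ H_null s E).

(* Put s0 = q - delta and r = q + delta, and send p in Ubar ∩ (s0, r) to pi_r(alpha(p)).
   If alpha(p1) and alpha(p2) first differ at index n, then |p1 - p2| <= C s0^-n, because both
   bases expand 1 with the same first n digits; and |pi_r alpha(p1) - pi_r alpha(p2)| >= c r^-n,
   because the smaller of the two digits is not maximal, so the tail after it is small.  Hence on
   each piece p <= r - eta the inverse map is Hölder with exponent gamma = ln s0 / ln r, and so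
   dim_H of the piece is at most dim_H(pi_r(U_delta(q))) / gamma.  Countable stability of
   Hausdorff-null sets takes care of the union over eta, and 1/gamma <= 1 + eps once delta is
   small. *)

From Stdlib Require Import Reals Lra Lia Classical FunctionalExtensionality ClassicalEpsilon List Cantor FinFun.
From Coquelicot Require Import Coquelicot.
Open Scope R_scope.

(** * Digit series *)

Definition shift (n : nat) (x : nat -> nat) : nat -> nat := fun k => x (n + k)%nat.

Fixpoint pi_prefix (p : R) (x : nat -> nat) (n : nat) : R :=
  match n with O => 0 | S m => pi_prefix p x m + INR (x m) / p ^ S m end.

Lemma digits_shift M n x : digits M x -> digits M (shift n x).
Proof. intros Hx k; apply Hx. Qed.

Lemma inv_lt_1 p : 1 < p -> / p < 1.
Proof. intros Hp. rewrite <- Rinv_1. apply Rinv_lt_contravar; lra. Qed.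

Lemma ln_gt_0 x : 1 < x -> 0 < ln x.
Proof. intros Hx. rewrite <- ln_1. apply ln_increasing; lra. Qed.

Lemma pi_max_ge_1 M p : 1 < p -> p <= INR M + 1 -> 1 <= INR M / (p - 1).
Proof.
  intros Hp HpM. apply (Rmult_le_reg_r (p - 1)); [lra|].
  unfold Rdiv. rewrite Rmult_assoc, Rinv_l; lra.
Qed.

Lemma eq_0_of_le_geom (z C p : R) (N : nat) : 1 < p ->
  (forall n, (N <= n)%nat -> Rabs z <= C / p ^ n) -> z = 0.
Proof.
  intros Hp Hz. apply NNPP. intros Hz0.
  assert (Habs : 0 < Rabs z) by (apply Rabs_pos_lt; auto).
  assert (HpN : 0 < p ^ N) by (apply pow_lt; lra).
  assert (HC : 0 < C).
  { specialize (Hz N (le_n _)). apply (Rmult_le_compat_r (p ^ N)) in Hz; [|lra].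
    unfold Rdiv in Hz. rewrite Rmult_assoc, Rinv_l in Hz; nra. }
  destruct (pow_lt_1_zero (/ p)) with (y := Rabs z / C) as [K HK].
  - rewrite Rabs_pos_eq; [apply inv_lt_1; lra|]. left; apply Rinv_0_lt_compat; lra.
  - apply Rdiv_lt_0_compat; lra.
  - specialize (HK (N + K)%nat ltac:(lia)). specialize (Hz (N + K)%nat ltac:(lia)).
    assert (HpNK : 0 < p ^ (N + K)) by (apply pow_lt; lra).
    rewrite Rabs_pos_eq, pow_inv in HK by (apply pow_le; left; apply Rinv_0_lt_compat; lra).
    apply (Rmult_lt_compat_l C) in HK; [|lra].
    replace (C * (Rabs z / C)) with (Rabs z) in HK by (field; lra).
    unfold Rdiv in Hz. lra.
Qed.

Lemma first_difference (x y : nat -> nat) k : x k <> y k ->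
  exists n, x n <> y n /\ forall j, (j < n)%nat -> x j = y j.
Proof.
  induction k as [k IH] using (well_founded_induction Wf_nat.lt_wf). intros Hk.
  destruct (classic (forall j, (j < k)%nat -> x j = y j)) as [H|H]; [exists k; auto|].
  apply not_all_ex_not in H as [j Hj]. apply imply_to_and in Hj as [Hjk Hj].
  exact (IH j Hjk Hj).
Qed.

Lemma eq_or_first_difference (x y : nat -> nat) :
  x = y \/ exists n, x n <> y n /\ forall j, (j < n)%nat -> x j = y j.
Proof.
  destruct (classic (forall k, x k = y k)) as [H|H].
  - left. apply functional_extensionality, H.
  - right. apply not_all_ex_not in H as [k Hk]. exact (first_difference x y k Hk).
Qed.

Section DigitSeries.
Variables (M : nat) (p : R).
Hypothesis Hp : 1 < p.

Lemma digit_term_bounds x k : digits M x ->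
  0 <= INR (x k) / p ^ S k <= INR M / p * (/ p) ^ k.
Proof.
  intros Hx.
  assert (0 < p ^ k) by (apply pow_lt; lra).
  assert (INR (x k) <= INR M) by (apply le_INR, Hx).
  assert (0 <= INR (x k)) by apply pos_INR.
  rewrite pow_inv. change (p ^ S k) with (p * p ^ k).
  split.
  - apply Rmult_le_pos; [lra|]. left; apply Rinv_0_lt_compat; nra.
  - unfold Rdiv. rewrite Rinv_mult, <- Rmult_assoc.
    apply Rmult_le_compat_r; [left; apply Rinv_0_lt_compat; lra|].
    apply Rmult_le_compat_r; [left; apply Rinv_0_lt_compat; lra|lra].
Qed.

Lemma is_series_geom_scal :
  is_series (fun k => INR M / p * (/ p) ^ k) (INR M / (p - 1)).
Proof.
  replace (INR M / (p - 1)) with (INR M / p * / (1 - / p)) by (field; lra).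
  apply (is_series_scal_l (INR M / p) (fun k => (/ p) ^ k) (/ (1 - / p))), is_series_geom.
  rewrite Rabs_pos_eq; [apply inv_lt_1; lra|]. left; apply Rinv_0_lt_compat; lra.
Qed.

Lemma ex_series_pi x : digits M x -> ex_series (fun k => INR (x k) / p ^ S k).
Proof.
  intros Hx. apply (@ex_series_le R_AbsRing R_CompleteNormedModule _
                     (fun k => INR M / p * (/ p) ^ k)).
  - intros k. change (Rabs (INR (x k) / p ^ S k) <= INR M / p * (/ p) ^ k).
    destruct (digit_term_bounds x k Hx). rewrite Rabs_pos_eq; lra.
  - eexists; apply is_series_geom_scal.
Qed.

Lemma pi_split x n : digits M x -> pi p x = pi_prefix p x n + pi p (shift n x) / p ^ n.
Proof.
  intros Hx. destruct n as [|n].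
  - change (pi p (shift 0 x)) with (pi p x). simpl. field.
  - unfold pi. rewrite (Series_incr_n _ (S n)); [|lia|apply ex_series_pi, Hx].
    assert (Hprefix : forall m, sum_f_R0 (fun k => INR (x k) / p ^ S k) m = pi_prefix p x (S m)).
    { induction m; [simpl; ring|]. rewrite tech5, IHm. reflexivity. }
    simpl pred. rewrite Hprefix. f_equal.
    unfold Rdiv at 2. rewrite <- Series_scal_r. apply Series_ext. intros k. unfold shift.
    replace (S (S n + k)) with (S k + S n)%nat by lia. rewrite pow_add.
    assert (0 < p ^ S n) by (apply pow_lt; lra).
    assert (0 < p ^ S k) by (apply pow_lt; lra).
    field. split; lra.
Qed.

Lemma pi_bounds x : digits M x -> 0 <= pi p x <= INR M / (p - 1).
Proof.
  intros Hx. unfold pi. split.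
  - rewrite <- (Rmult_0_l (Series (fun _ => 0))), <- Series_scal_l.
    apply Series_le; [|apply ex_series_pi, Hx].
    intros k. destruct (digit_term_bounds x k Hx). lra.
  - rewrite <- (is_series_unique _ _ is_series_geom_scal).
    apply Series_le; [|eexists; apply is_series_geom_scal].
    intros k. apply digit_term_bounds, Hx.
Qed.

Lemma pi_prefix_ge0 x n : 0 <= pi_prefix p x n.
Proof.
  induction n as [|n IH]; cbn [pi_prefix]; [lra|].
  assert (0 < p ^ S n) by (apply pow_lt; lra).
  assert (0 <= INR (x n) / p ^ S n)
    by (apply Rmult_le_pos; [apply pos_INR|left; apply Rinv_0_lt_compat; lra]).
  lra.
Qed.

Lemma pi_pos x : digits M x -> (exists j, x j <> 0%nat) -> 0 < pi p x.
Proof.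
  intros Hx [j Hj]. rewrite (pi_split x (S j) Hx). cbn [pi_prefix].
  assert (0 < p ^ S j) by (apply pow_lt; lra).
  assert (0 < INR (x j) / p ^ S j)
    by (apply Rdiv_lt_0_compat; [apply lt_0_INR; lia|lra]).
  assert (0 <= pi p (shift (S j) x) / p ^ S j).
  { apply Rmult_le_pos; [apply pi_bounds, digits_shift, Hx|].
    left; apply Rinv_0_lt_compat; lra. }
  pose proof (pi_prefix_ge0 x j). lra.
Qed.

End DigitSeries.

Lemma pi_prefix_ext p x y n : (forall k, (k < n)%nat -> x k = y k) ->
  pi_prefix p x n = pi_prefix p y n.
Proof.
  induction n as [|n IH]; intros Hxy; simpl; [reflexivity|].
  rewrite IH, (Hxy n); [reflexivity|lia|intros; apply Hxy; lia].
Qed.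

Lemma digit_term_base_le p1 p2 d k : 0 < p1 <= p2 -> INR d / p2 ^ k <= INR d / p1 ^ k.
Proof.
  intros Hp. assert (0 < p1 ^ k) by (apply pow_lt; lra).
  assert (p1 ^ k <= p2 ^ k) by (apply pow_incr; lra).
  apply Rmult_le_compat_l; [apply pos_INR|]. apply Rinv_le_contravar; lra.
Qed.

Lemma pi_le_base M p r x : digits M x -> 1 < p <= r -> pi r x <= p / r * pi p x.
Proof.
  intros Hx Hpr. unfold pi. rewrite <- Series_scal_l.
  apply Series_le;
    [|apply (ex_series_scal_l (p / r) (fun k => INR (x k) / p ^ S k)), (ex_series_pi M); [lra|exact Hx]].
  intros k. change (r ^ S k) with (r * r ^ k). change (p ^ S k) with (p * p ^ k).
  assert (0 < r ^ k) by (apply pow_lt; lra).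
  assert (0 <= INR (x k)) by apply pos_INR.
  pose proof (digit_term_base_le p r (x k) k ltac:(lra)).
  split.
  - apply Rmult_le_pos; [lra|]. left; apply Rinv_0_lt_compat; nra.
  - replace (INR (x k) / (r * r ^ k)) with (/ r * (INR (x k) / r ^ k)) by (field; lra).
    replace (p / r * (INR (x k) / (p * p ^ k))) with (/ r * (INR (x k) / p ^ k))
      by (field; assert (0 < p ^ k) by (apply pow_lt; lra); lra).
    apply Rmult_le_compat_l; [left; apply Rinv_0_lt_compat; lra|assumption].
Qed.

(** * Quasi-greedy expansions *)

Fixpoint last_true (f : nat -> bool) (m : nat) : nat :=
  match m with O => O | S m' => if f (S m') then S m' else last_true f m' end.

Lemma last_true_le f m : (last_true f m <= m)%nat.
Proof. induction m; simpl; [lia|]. destruct (f (S m)); lia. Qed.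

Lemma last_true_spec f m : f O = true -> f (last_true f m) = true.
Proof. intros H0. induction m; simpl; [exact H0|]. destruct (f (S m)) eqn:E; auto. Qed.

Lemma last_true_max f m : (last_true f m < m)%nat -> f (S (last_true f m)) = false.
Proof.
  induction m as [|m IH]; simpl; intros Hlt; [lia|].
  destruct (f (S m)) eqn:E; [lia|].
  destruct (Nat.lt_ge_cases (last_true f m) m) as [Hl|Hg]; [exact (IH Hl)|].
  pose proof (last_true_le f m). replace (last_true f m) with m by lia. exact E.
Qed.

Definition fits (p x s : R) (k d : nat) : bool :=
  if Rlt_dec (s + INR d / p ^ S k) x then true else false.

Lemma fits_true p x s k d : fits p x s k d = true -> s + INR d / p ^ S k < x.
Proof. unfold fits. destruct Rlt_dec; [auto|discriminate]. Qed.

Lemma fits_false p x s k d : fits p x s k d = false -> x <= s + INR d / p ^ S k.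
Proof. unfold fits. destruct Rlt_dec; [discriminate|intros _; lra]. Qed.

(* The digit chosen at step k is the largest d <= M keeping the partial sum
   strictly below x; strictness is what prevents the expansion from ending in 0^oo. *)
Fixpoint qgreedy_prefix (M : nat) (p x : R) (k : nat) : R :=
  match k with
  | O => 0
  | S k' => qgreedy_prefix M p x k'
            + INR (last_true (fits p x (qgreedy_prefix M p x k') k') M) / p ^ S k'
  end.

Definition qgreedy (M : nat) (p x : R) (k : nat) : nat :=
  last_true (fits p x (qgreedy_prefix M p x k) k) M.

Definition alpha (M : nat) (p : R) : nat -> nat := qgreedy M p 1.

Lemma qgreedy_prefix_S M p x k :
  qgreedy_prefix M p x (S k) = qgreedy_prefix M p x k + INR (qgreedy M p x k) / p ^ S k.
Proof. reflexivity. Qed.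

Lemma qgreedy_prefix_eq M p x k : qgreedy_prefix M p x k = pi_prefix p (qgreedy M p x) k.
Proof. induction k as [|k IH]; [reflexivity|]. rewrite qgreedy_prefix_S, IH. reflexivity. Qed.

Lemma qgreedy_digits M p x : digits M (qgreedy M p x).
Proof. intros k. apply last_true_le. Qed.

Section Qgreedy.
Variables (M : nat) (p x : R).

Lemma qgreedy_gap k : (qgreedy M p x k < M)%nat -> x - qgreedy_prefix M p x (S k) <= / p ^ S k.
Proof.
  intros Hlt. pose proof (fits_false _ _ _ _ _ (last_true_max _ _ Hlt)) as Hn.
  fold (qgreedy M p x k) in Hn. rewrite S_INR in Hn.
  rewrite qgreedy_prefix_S. unfold Rdiv in *. lra.
Qed.

Hypothesis Hx : 0 < x.

Lemma qgreedy_prefix_lt k : qgreedy_prefix M p x k < x.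
Proof.
  induction k as [|k IH]; [exact Hx|].
  assert (H0 : fits p x (qgreedy_prefix M p x k) k O = true).
  { unfold fits. destruct Rlt_dec as [|Hn]; [reflexivity|].
    exfalso. apply Hn. simpl. lra. }
  exact (fits_true _ _ _ _ _ (last_true_spec _ M H0)).
Qed.

Hypothesis Hp : 1 < p.
Hypothesis HpM : p <= INR M + 1.
Hypothesis HxM : x <= INR M / (p - 1).

Lemma qgreedy_remainder_le k : x - qgreedy_prefix M p x k <= INR M / (p - 1) / p ^ k.
Proof.
  induction k as [|k IH]; [simpl; lra|].
  assert (0 < p ^ S k) by (apply pow_lt; lra).
  destruct (Nat.lt_ge_cases (qgreedy M p x k) M) as [Hlt|Hge].
  - apply (Rle_trans _ _ _ (qgreedy_gap k Hlt)). unfold Rdiv.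
    rewrite <- (Rmult_1_l (/ p ^ S k)) at 1.
    apply Rmult_le_compat_r; [left; apply Rinv_0_lt_compat; lra|].
    apply pi_max_ge_1; assumption.
  - pose proof (qgreedy_digits M p x k).
    rewrite qgreedy_prefix_S. replace (qgreedy M p x k) with M by lia.
    replace (INR M / (p - 1) / p ^ S k)
      with (INR M / (p - 1) / p ^ k - INR M / p ^ S k)
      by (simpl; field; repeat split; try apply pow_nonzero; lra).
    lra.
Qed.

Lemma qgreedy_pi : pi p (qgreedy M p x) = x.
Proof.
  apply Rminus_diag_uniq, (eq_0_of_le_geom _ (2 * (INR M / (p - 1))) p 0); [exact Hp|].
  intros n _. rewrite (pi_split M p Hp _ n (qgreedy_digits M p x)), <- qgreedy_prefix_eq.
  pose proof (qgreedy_prefix_lt n). pose proof (qgreedy_remainder_le n).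
  destruct (pi_bounds M p Hp (shift n (qgreedy M p x)) (digits_shift _ _ _ (qgreedy_digits M p x)))
    as [B0 B1].
  assert (0 < p ^ n) by (apply pow_lt; lra).
  assert (0 <= pi p (shift n (qgreedy M p x)) / p ^ n <= INR M / (p - 1) / p ^ n).
  { unfold Rdiv. split; [apply Rmult_le_pos; [lra|left; apply Rinv_0_lt_compat; lra]|].
    apply Rmult_le_compat_r; [left; apply Rinv_0_lt_compat; lra|exact B1]. }
  unfold Rdiv in *. apply Rabs_le. split; nra.
Qed.

Lemma qgreedy_not_ending_in_zeros : not_ending_in_zeros (qgreedy M p x).
Proof.
  intros n. apply NNPP. intros Hn.
  assert (Hz : forall k, (n <= k)%nat -> qgreedy M p x k = O).
  { intros k Hk. apply NNPP. intros Hk'. apply Hn. exists k; auto. }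
  assert (Hconst : forall j, qgreedy_prefix M p x (n + j) = qgreedy_prefix M p x n).
  { induction j as [|j IH]; [rewrite Nat.add_0_r; reflexivity|].
    rewrite Nat.add_succ_r, qgreedy_prefix_S, Hz, IH by lia. simpl. lra. }
  pose proof (qgreedy_prefix_lt n).
  assert (x - qgreedy_prefix M p x n = 0); [|lra].
  apply (eq_0_of_le_geom _ (INR M / (p - 1)) p n Hp). intros m Hm.
  replace m with (n + (m - n))%nat by lia. rewrite <- (Hconst (m - n)%nat).
  pose proof (qgreedy_prefix_lt (n + (m - n))). pose proof (qgreedy_remainder_le (n + (m - n))).
  rewrite Rabs_pos_eq; lra.
Qed.

Lemma qgreedy_lex_max c : digits M c -> not_ending_in_zeros c -> pi p c = x ->
  lex_le c (qgreedy M p x).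
Proof.
  intros Hc Hcz Hpic. destruct (eq_or_first_difference c (qgreedy M p x)) as [->|[n [Hn Hagree]]];
    [left; reflexivity|right; exists n; split; [exact Hagree|]].
  apply NNPP. intros Hge. assert (Hlt : (qgreedy M p x n < c n)%nat) by lia.
  pose proof (qgreedy_gap n ltac:(specialize (Hc n); lia)) as Hgap.
  rewrite (pi_split M p Hp c (S n) Hc) in Hpic. cbn [pi_prefix] in Hpic.
  rewrite (pi_prefix_ext p c (qgreedy M p x) n Hagree), <- qgreedy_prefix_eq in Hpic.
  rewrite qgreedy_prefix_S in Hgap.
  assert (0 < pi p (shift (S n) c)).
  { apply (pi_pos M p Hp); [apply digits_shift, Hc|].
    destruct (Hcz (S n)) as [j [Hj Hcj]]. exists (j - S n)%nat. unfold shift.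
    replace (S n + (j - S n))%nat with j by lia. exact Hcj. }
  assert (0 < p ^ S n) by (apply pow_lt; lra).
  assert (INR (qgreedy M p x n) + 1 <= INR (c n)) by (rewrite <- S_INR; apply le_INR; lia).
  assert (0 < pi p (shift (S n) c) / p ^ S n) by (apply Rdiv_lt_0_compat; lra).
  assert ((INR (qgreedy M p x n) + 1) / p ^ S n <= INR (c n) / p ^ S n)
    by (apply Rmult_le_compat_r; [left; apply Rinv_0_lt_compat|]; lra).
  unfold Rdiv in *. rewrite Rmult_plus_distr_r in *. lra.
Qed.

End Qgreedy.

Lemma alpha_quasi_greedy M p : 1 < p -> p <= INR M + 1 -> quasi_greedy M p (alpha M p).
Proof.
  intros Hp HpM. pose proof (pi_max_ge_1 M p Hp HpM).
  split; [apply qgreedy_digits|].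
  split; [apply qgreedy_not_ending_in_zeros; lra|].
  split; [apply qgreedy_pi; lra|].
  intros b Hb Hbz Hpib. apply qgreedy_lex_max; auto; lra.
Qed.

(** * The inverse of p |-> pi_r(alpha(p)) is Hölder *)

Lemma alpha_first_digit_pos M p : (0 < M)%nat -> 1 < p -> p <= INR M + 1 ->
  (1 <= alpha M p 0)%nat.
Proof.
  intros HM Hp HpM. destruct (Nat.eq_dec (alpha M p 0) 0) as [E|E]; [exfalso|lia].
  pose proof (qgreedy_gap M p 1 0 ltac:(unfold alpha in E; lia)) as Hgap.
  rewrite qgreedy_prefix_S in Hgap. fold (alpha M p) in Hgap. rewrite E in Hgap.
  pose proof (inv_lt_1 p Hp). simpl in Hgap. rewrite Rmult_1_r in Hgap. lra.
Qed.

Lemma pi_alpha_tail_le_1 M p k : 1 < p -> p <= INR M + 1 -> (alpha M p k < M)%nat ->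
  pi p (shift (S k) (alpha M p)) <= 1.
Proof.
  intros Hp HpM Hlt. pose proof (pi_max_ge_1 M p Hp HpM).
  pose proof (qgreedy_gap M p 1 k Hlt) as Hgap.
  pose proof (qgreedy_pi M p 1 ltac:(lra) Hp HpM ltac:(lra)) as Hpi.
  rewrite (pi_split M p Hp _ (S k) (qgreedy_digits M p 1)), <- qgreedy_prefix_eq in Hpi.
  assert (0 < p ^ S k) by (apply pow_lt; lra).
  apply (Rmult_le_reg_r (/ p ^ S k)); [apply Rinv_0_lt_compat; lra|].
  unfold alpha, Rdiv in *. lra.
Qed.

Lemma pi_div_pow_le M s0 p x n : digits M x -> 1 < s0 <= p ->
  pi p x / p ^ n <= INR M / (s0 - 1) / s0 ^ n.
Proof.
  intros Hx Hp. destruct (pi_bounds M p ltac:(lra) x Hx) as [B0 B1].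
  assert (0 < s0 ^ n) by (apply pow_lt; lra).
  assert (s0 ^ n <= p ^ n) by (apply pow_incr; lra).
  unfold Rdiv. apply Rmult_le_compat; [lra|left; apply Rinv_0_lt_compat; lra| |].
  - apply (Rle_trans _ _ _ B1). apply Rmult_le_compat_l; [apply pos_INR|].
    apply Rinv_le_contravar; lra.
  - apply Rinv_le_contravar; lra.
Qed.

Lemma pi_prefix_base_gap p1 p2 y n : 0 < p1 <= p2 -> (1 <= n)%nat ->
  INR (y O) * (/ p1 - / p2) <= pi_prefix p1 y n - pi_prefix p2 y n.
Proof.
  intros Hp Hn. induction n as [|n IH]; [lia|]. cbn [pi_prefix].
  pose proof (digit_term_base_le p1 p2 (y n) (S n) Hp).
  destruct n as [|n].
  - simpl. unfold Rdiv. rewrite !Rmult_1_r. lra.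
  - specialize (IH ltac:(lia)). lra.
Qed.

Section AlphaGeometry.
Variables (M : nat) (s0 r : R).
Hypothesis HM : (0 < M)%nat.
Hypothesis Hs0 : 1 < s0.
Hypothesis Hr : s0 < r.

Definition alpha_dist_const : R := r * r * INR M / (s0 - 1) + r.

Lemma alpha_dist_const_pos : 0 < alpha_dist_const.
Proof.
  unfold alpha_dist_const.
  assert (0 <= r * r * INR M / (s0 - 1)); [|lra].
  apply Rmult_le_pos; [apply Rmult_le_pos; [nra|apply pos_INR]|].
  left; apply Rinv_0_lt_compat; lra.
Qed.

(* Both bases expand 1 with the same first n digits, so the digit sums in bases p1 and p2
   differ by at most the tail; the first digit is >= 1, which bounds /p1 - /p2. *)
Lemma inv_base_diff_le p1 p2 n : s0 <= p1 <= p2 -> p2 <= INR M + 1 -> (1 <= n)%nat ->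
  (forall k, (k < n)%nat -> alpha M p1 k = alpha M p2 k) ->
  / p1 - / p2 <= INR M / (s0 - 1) / s0 ^ n.
Proof.
  intros Hp HpM Hn Hagree.
  assert (Hpi : forall p, s0 <= p <= INR M + 1 ->
            pi_prefix p (alpha M p) n + pi p (shift n (alpha M p)) / p ^ n = 1).
  { intros p Hp'. unfold alpha. rewrite <- (pi_split M p ltac:(lra) _ n (qgreedy_digits M p 1)).
    apply qgreedy_pi; [lra|lra|lra|apply pi_max_ge_1; lra]. }
  pose proof (Hpi p1 ltac:(lra)) as E1. pose proof (Hpi p2 ltac:(lra)) as E2.
  rewrite (pi_prefix_ext p1 _ (alpha M p2) n Hagree) in E1.
  pose proof (pi_prefix_base_gap p1 p2 (alpha M p2) n ltac:(lra) Hn) as Hgap.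
  assert (1 <= INR (alpha M p2 0))
    by (apply (le_INR 1), alpha_first_digit_pos; [exact HM|lra|lra]).
  assert (0 <= / p1 - / p2)
    by (assert (/ p2 <= / p1) by (apply Rinv_le_contravar; lra); lra).
  assert (0 <= pi p1 (shift n (alpha M p1)) / p1 ^ n).
  { apply Rmult_le_pos; [apply (pi_bounds M); [lra|apply digits_shift, qgreedy_digits]|].
    left; apply Rinv_0_lt_compat, pow_lt; lra. }
  pose proof (pi_div_pow_le M s0 p2 _ n (digits_shift M n _ (qgreedy_digits M p2 1))
                ltac:(lra)).
  fold (alpha M p2) in *. nra.
Qed.

Lemma alpha_close p1 p2 n : s0 <= p1 <= r -> s0 <= p2 <= r ->
  p1 <= INR M + 1 -> p2 <= INR M + 1 ->
  (forall k, (k < n)%nat -> alpha M p1 k = alpha M p2 k) ->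
  Rabs (p1 - p2) <= alpha_dist_const / s0 ^ n.
Proof.
  assert (Hle : forall p1 p2, s0 <= p1 <= p2 -> p2 <= r -> p2 <= INR M + 1 ->
            (forall k, (k < n)%nat -> alpha M p1 k = alpha M p2 k) ->
            p2 - p1 <= alpha_dist_const / s0 ^ n).
  { clear p1 p2. intros p1 p2 Hp Hpr HpM Hagree.
    assert (0 < s0 ^ n) by (apply pow_lt; lra).
    assert (0 <= r * r * INR M / (s0 - 1))
      by (apply Rmult_le_pos; [apply Rmult_le_pos; [nra|apply pos_INR]|];
          left; apply Rinv_0_lt_compat; lra).
    unfold alpha_dist_const, Rdiv. rewrite Rmult_plus_distr_r.
    destruct n as [|n'].
    - simpl. rewrite Rinv_1. lra.
    - pose proof (inv_base_diff_le p1 p2 (S n') Hp HpM ltac:(lia) Hagree) as Hinv.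
      replace (p2 - p1) with (p1 * p2 * (/ p1 - / p2)) by (field; lra).
      assert (0 <= / p1 - / p2)
        by (assert (/ p2 <= / p1) by (apply Rinv_le_contravar; lra); lra).
      assert (0 <= r * / s0 ^ S n') by (apply Rmult_le_pos; [|left; apply Rinv_0_lt_compat]; lra).
      assert (p1 * p2 * (/ p1 - / p2) <= r * r * (INR M / (s0 - 1) / s0 ^ S n'))
        by (apply Rmult_le_compat; nra).
      unfold Rdiv in *. lra. }
  intros Hp1 Hp2 HpM1 HpM2 Hagree. destruct (Rle_dec p1 p2).
  - rewrite Rabs_minus_sym, Rabs_pos_eq by lra. apply Hle; auto; lra.
  - rewrite Rabs_pos_eq by lra. apply Hle; [lra|lra|lra|]. intros k Hk; symmetry; auto.
Qed.

Lemma alpha_injective p1 p2 : s0 <= p1 <= r -> s0 <= p2 <= r ->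
  p1 <= INR M + 1 -> p2 <= INR M + 1 -> alpha M p1 = alpha M p2 -> p1 = p2.
Proof.
  intros Hp1 Hp2 HpM1 HpM2 E. apply Rminus_diag_uniq.
  apply (eq_0_of_le_geom _ alpha_dist_const s0 0 Hs0). intros n _.
  apply alpha_close; auto. intros k _. rewrite E. reflexivity.
Qed.


(* Digit n of alpha(p2) exceeds that of alpha(p1); this non-maximal digit forces the tail of
   alpha(p1) to have value <= 1 in base p1, hence <= p1/r in base r. *)
Lemma pi_alpha_sep p1 p2 n : 1 < p1 <= r -> 1 < p2 -> p1 <= INR M + 1 -> p2 <= INR M + 1 ->
  (forall k, (k < n)%nat -> alpha M p1 k = alpha M p2 k) ->
  (alpha M p1 n < alpha M p2 n)%nat ->
  (r - p1) / r ^ S (S n) <= pi r (alpha M p2) - pi r (alpha M p1).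
Proof.
  intros Hp1 Hp2 HpM1 HpM2 Hagree Hlt.
  assert (Hr1 : 1 < r) by lra.
  assert (Hd : forall p, digits M (shift (S n) (alpha M p)))
    by (intros p; apply digits_shift, qgreedy_digits).
  rewrite (pi_split M r Hr1 (alpha M p1) (S n) (qgreedy_digits _ _ _)).
  rewrite (pi_split M r Hr1 (alpha M p2) (S n) (qgreedy_digits _ _ _)).
  cbn [pi_prefix]. rewrite (pi_prefix_ext r _ (alpha M p2) n Hagree).
  assert (Hnmax : (alpha M p1 n < M)%nat) by (pose proof (qgreedy_digits M p2 1 n); unfold alpha in *; lia).
  pose proof (pi_alpha_tail_le_1 M p1 n ltac:(lra) HpM1 Hnmax) as Htail.
  pose proof (pi_le_base M p1 r _ (Hd p1) ltac:(lra)) as Hbase.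
  destruct (pi_bounds M r Hr1 _ (Hd p2)) as [T2 _].
  destruct (pi_bounds M p1 ltac:(lra) _ (Hd p1)) as [T1 _].
  assert (INR (alpha M p1 n) + 1 <= INR (alpha M p2 n)) by (rewrite <- S_INR; apply le_INR; lia).
  assert (0 < r ^ n) by (apply pow_lt; lra).
  assert (p1 / r * pi p1 (shift (S n) (alpha M p1)) <= p1 / r)
    by (assert (0 < p1 / r) by (apply Rdiv_lt_0_compat; lra); nra).
  change (r ^ S (S n)) with (r * (r * r ^ n)). change (r ^ S n) with (r * r ^ n).
  set (A := r * r ^ n). assert (0 < A) by (unfold A; nra).
  replace ((r - p1) / (r * A)) with ((1 - p1 / r) / A) by (field; lra).
  match goal with |- _ <= ?rhs => replace rhs with
    ((INR (alpha M p2 n) + pi r (shift (S n) (alpha M p2))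
      - INR (alpha M p1 n) - pi r (shift (S n) (alpha M p1))) / A) by (field; lra) end.
  apply Rmult_le_compat_r; [left; apply Rinv_0_lt_compat; lra|]. lra.
Qed.

Lemma pi_alpha_sep_abs eta p1 p2 n : 0 < eta -> 1 < p1 <= r - eta -> 1 < p2 <= r - eta ->
  p1 <= INR M + 1 -> p2 <= INR M + 1 ->
  (forall k, (k < n)%nat -> alpha M p1 k = alpha M p2 k) -> alpha M p1 n <> alpha M p2 n ->
  eta / r ^ S (S n) <= Rabs (pi r (alpha M p1) - pi r (alpha M p2)).
Proof.
  intros Heta Hp1 Hp2 HpM1 HpM2 Hagree Hn.
  assert (0 < r ^ S (S n)) by (apply pow_lt; lra).
  assert (Hscale : forall p, p <= r - eta -> eta / r ^ S (S n) <= (r - p) / r ^ S (S n))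
    by (intros p Hp; apply Rmult_le_compat_r; [left; apply Rinv_0_lt_compat|]; lra).
  assert (0 < eta / r ^ S (S n)) by (apply Rdiv_lt_0_compat; lra).
  destruct (Nat.lt_gt_cases (alpha M p1 n) (alpha M p2 n)) as [[Hlt|Hgt] _]; [exact Hn| |].
  - pose proof (pi_alpha_sep p1 p2 n ltac:(lra) ltac:(lra) HpM1 HpM2 Hagree Hlt).
    pose proof (Hscale p1 ltac:(lra)).
    rewrite Rabs_minus_sym, Rabs_pos_eq; lra.
  - pose proof (pi_alpha_sep p2 p1 n ltac:(lra) ltac:(lra) HpM2 HpM1
                  ltac:(intros k Hk; symmetry; auto) Hgt).
    pose proof (Hscale p2 ltac:(lra)).
    rewrite Rabs_pos_eq; lra.
Qed.

Definition holder_exp : R := ln s0 / ln r.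

Lemma holder_exp_pos : 0 < holder_exp.
Proof. apply Rdiv_lt_0_compat; apply ln_gt_0; lra. Qed.

Lemma Rpower_holder_exp c n : 0 < c ->
  Rpower (c / r ^ n) holder_exp = Rpower c holder_exp / s0 ^ n.
Proof.
  intros Hc. unfold Rdiv. rewrite <- Rpower_mult_distr by (try apply Rinv_0_lt_compat, pow_lt; lra).
  f_equal. rewrite <- (Rpower_pow n r), <- (Rpower_pow n s0), <- !Rpower_Ropp by lra.
  rewrite Rpower_mult. unfold Rpower. f_equal.
  unfold holder_exp. pose proof (ln_gt_0 r ltac:(lra)). field. lra.
Qed.

Definition holder_const (eta : R) : R :=
  alpha_dist_const / Rpower (eta / (r * r)) holder_exp.

Lemma holder_const_pos eta : 0 < holder_const eta.
Proof. apply Rdiv_lt_0_compat; [apply alpha_dist_const_pos|apply exp_pos]. Qed.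

Lemma alpha_holder eta p1 p2 d : 0 < eta -> s0 <= p1 <= r - eta -> s0 <= p2 <= r - eta ->
  p1 <= INR M + 1 -> p2 <= INR M + 1 ->
  Rabs (pi r (alpha M p1) - pi r (alpha M p2)) <= d ->
  Rabs (p1 - p2) <= holder_const eta * Rpower d holder_exp.
Proof.
  intros Heta Hp1 Hp2 HpM1 HpM2 Hd.
  pose proof (holder_const_pos eta).
  destruct (eq_or_first_difference (alpha M p1) (alpha M p2)) as [E|[n [Hn Hagree]]].
  - rewrite (alpha_injective p1 p2), Rminus_diag, Rabs_R0 by (auto; lra).
    apply Rmult_le_pos; [lra|left; apply exp_pos].
  - pose proof (alpha_close p1 p2 n ltac:(lra) ltac:(lra) HpM1 HpM2 Hagree) as Hclose.
    pose proof (pi_alpha_sep_abs eta p1 p2 n Heta ltac:(lra) ltac:(lra) HpM1 HpM2 Hagree Hn)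
      as Hsep.
    assert (Hr2 : 0 < r * r) by nra.
    replace (eta / r ^ S (S n)) with (eta / (r * r) / r ^ n) in Hsep
      by (simpl; field; split; [apply pow_nonzero|]; lra).
    assert (Hsep_pos : 0 < eta / (r * r) / r ^ n)
      by (apply Rdiv_lt_0_compat; [apply Rdiv_lt_0_compat|apply pow_lt]; lra).
    pose proof (Rle_Rpower_l _ _ holder_exp (Rlt_le _ _ holder_exp_pos)
                  (conj Hsep_pos (Rle_trans _ _ _ Hsep Hd))) as Hpow.
    rewrite Rpower_holder_exp in Hpow by (apply Rdiv_lt_0_compat; lra).
    apply (Rle_trans _ _ _ Hclose).
    unfold holder_const. pose proof (exp_pos (holder_exp * ln (eta / (r * r)))).
    assert (0 < s0 ^ n) by (apply pow_lt; lra).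
    unfold Rpower in *. unfold Rdiv in *.
    replace (alpha_dist_const * / s0 ^ n)
      with (alpha_dist_const * / exp (holder_exp * ln (eta * / (r * r)))
            * (exp (holder_exp * ln (eta * / (r * r))) * / s0 ^ n)) by (field; lra).
    apply Rmult_le_compat_l; [|exact Hpow].
    apply Rmult_le_pos; [left; apply alpha_dist_const_pos|left; apply Rinv_0_lt_compat; lra].
Qed.

End AlphaGeometry.

(** * Hausdorff-null sets and Hausdorff dimension *)

Definition lsum {T} (f : T -> R) (l : list T) : R := fold_right (fun x acc => f x + acc) 0 l.

Lemma lsum_app {T} (f : T -> R) l1 l2 : lsum f (l1 ++ l2) = lsum f l1 + lsum f l2.
Proof. induction l1 as [|a l1 IH]; simpl; [ring|]. unfold lsum in *. simpl. rewrite IH. ring. Qed.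

Lemma lsum_map {T U} (f : U -> R) (h : T -> U) l : lsum f (map h l) = lsum (fun x => f (h x)) l.
Proof. induction l as [|a l IH]; [reflexivity|]. unfold lsum in *. simpl. rewrite IH. reflexivity. Qed.

Lemma lsum_le {T} (f g : T -> R) l : (forall x, In x l -> f x <= g x) -> lsum f l <= lsum g l.
Proof.
  induction l as [|a l IH]; intros H; unfold lsum in *; simpl; [lra|].
  assert (f a <= g a) by (apply H; left; reflexivity).
  assert (fold_right (fun x acc => f x + acc) 0 l <= fold_right (fun x acc => g x + acc) 0 l)
    by (apply IH; intros; apply H; right; assumption).
  lra.
Qed.

Lemma lsum_ge0 {T} (f : T -> R) l : (forall x, 0 <= f x) -> 0 <= lsum f l.
Proof. intros H. induction l as [|a l IH]; unfold lsum in *; simpl; [lra|]. specialize (H a). lra. Qed.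

Lemma lsum_incl {T} (f : T -> R) (l L : list T) : (forall x, 0 <= f x) -> NoDup l -> incl l L ->
  lsum f l <= lsum f L.
Proof.
  revert L. induction l as [|a l IH]; intros L Hf Hnd Hincl; [apply lsum_ge0, Hf|].
  destruct (in_split a L (Hincl a (or_introl eq_refl))) as [L1 [L2 ->]].
  inversion Hnd as [|? ? Hal Hnd']; subst.
  assert (lsum f l <= lsum f (L1 ++ L2)).
  { apply IH; [exact Hf|exact Hnd'|]. intros y Hy.
    assert (HyL : In y (L1 ++ a :: L2)) by (apply Hincl; right; exact Hy).
    apply in_app_or in HyL. apply in_or_app. destruct HyL as [?|[<-|?]]; auto. contradiction. }
  rewrite lsum_app in *. unfold lsum in *. simpl in *. lra.
Qed.

Lemma sum_n_lsum (h : nat -> R) N : sum_n h N = lsum h (seq 0 (S N)).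
Proof.
  induction N as [|N IH]; [rewrite sum_O; unfold lsum; simpl; ring|].
  rewrite sum_Sn, IH, (seq_S (S N) 0), lsum_app. unfold lsum at 3. simpl. unfold plus. simpl. ring.
Qed.

Lemma lsum_prod {A B} (f : A * B -> R) l l' :
  lsum f (list_prod l l') = lsum (fun a => lsum (fun b => f (a, b)) l') l.
Proof. induction l as [|a l IH]; [reflexivity|]. simpl. rewrite lsum_app, lsum_map, IH. reflexivity. Qed.

Lemma lsum_geom eps n : lsum (fun m => eps / 2 ^ S m) (seq 0 n) = eps * (1 - / 2 ^ n).
Proof.
  induction n as [|n IH]; [unfold lsum; simpl; field|].
  rewrite seq_S, lsum_app, IH. unfold lsum. simpl.
  assert (0 < 2 ^ n) by (apply pow_lt; lra). field. lra.
Qed.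

Lemma H_null_subset s (E F : R -> Prop) : (forall x, F x -> E x) -> H_null s E -> H_null s F.
Proof.
  intros HFE HE eta eps Heta Heps.
  destruct (HE eta eps Heta Heps) as [a [b [Hab [Hcov Hsum]]]].
  exists a, b. split; [exact Hab|split; [|exact Hsum]].
  intros x Fx. exact (Hcov x (HFE x Fx)).
Qed.

(* The m-th set is covered with total weight eps / 2^(m+1); the covers are merged along the
   Cantor enumeration of N x N, whose first N+1 values lie in [0, N] x [0, N]. *)
Lemma H_null_countable_union s (E : nat -> R -> Prop) (F : R -> Prop) :
  (forall m, H_null s (E m)) -> (forall x, F x -> exists m, E m x) -> H_null s F.
Proof.
  intros HE HF eta eps Heta Heps.
  assert (Hcovers : forall m, exists ab : (nat -> R) * (nat -> R),
    (forall i, fst ab i < snd ab i /\ snd ab i - fst ab i <= eta) /\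
    (forall x, E m x -> exists i, fst ab i <= x <= snd ab i) /\
    (forall n, sum_n (fun i => Rpower (snd ab i - fst ab i) s) n <= eps / 2 ^ S m)).
  { intros m.
    assert (Hepsm : 0 < eps / 2 ^ S m) by (apply Rdiv_lt_0_compat; [lra|apply pow_lt; lra]).
    destruct (HE m eta _ Heta Hepsm) as [a [b Hab]]. exists (a, b). exact Hab. }
  destruct (choice _ Hcovers) as [ab Hab].
  exists (fun k => fst (ab (fst (of_nat k))) (snd (of_nat k))),
         (fun k => snd (ab (fst (of_nat k))) (snd (of_nat k))).
  split; [intros k; apply Hab|split].
  - intros x Fx. destruct (HF x Fx) as [m Hm].
    destruct (proj1 (proj2 (Hab m)) x Hm) as [i Hi].
    exists (to_nat (m, i)). rewrite cancel_of_to. exact Hi.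
  - intros N.
    set (f := fun mi : nat * nat =>
                Rpower (snd (ab (fst mi)) (snd mi) - fst (ab (fst mi)) (snd mi)) s).
    assert (Hf : forall mi, 0 <= f mi) by (intros; left; apply exp_pos).
    rewrite sum_n_lsum. change (lsum (fun k => f (of_nat k)) (seq 0 (S N)) <= eps).
    rewrite <- lsum_map.
    apply (Rle_trans _ (lsum f (list_prod (seq 0 (S N)) (seq 0 (S N))))).
    + apply lsum_incl; [exact Hf| |].
      * apply Injective_map_NoDup; [|apply seq_NoDup].
        intros k1 k2 Ek. rewrite <- (cancel_to_of k1), <- (cancel_to_of k2), Ek. reflexivity.
      * intros [m i] Hmi. apply in_map_iff in Hmi as [k [Ek Hk]]. apply in_seq in Hk.
        pose proof (to_nat_non_decreasing m i) as Hmono. rewrite <- Ek, cancel_to_of in Hmono.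
        apply in_prod; apply in_seq; lia.
    + rewrite lsum_prod.
      apply (Rle_trans _ (lsum (fun m => eps / 2 ^ S m) (seq 0 (S N)))).
      * apply lsum_le. intros m _. rewrite <- sum_n_lsum. apply Hab.
      * rewrite lsum_geom.
        assert (0 < / 2 ^ S N) by (apply Rinv_0_lt_compat, pow_lt; lra). nra.
Qed.

Lemma Rpower_scale_exp K t ga s : 0 < K -> 0 < t -> 0 < ga ->
  Rpower (K * Rpower t ga) (s / ga) = Rpower K (s / ga) * Rpower t s.
Proof.
  intros HK Ht Hga. rewrite <- Rpower_mult_distr, Rpower_mult by (try apply exp_pos; lra).
  f_equal. f_equal. field. lra.
Qed.

(* Each interval of a cover of f(Y) is replaced by an interval of radius K (b - a)^ga around
   one point of Y mapped into it (chosen by epsilon). *)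
Lemma H_null_of_inverse_holder (Y : R -> Prop) (f : R -> R) K ga s : 0 < K -> 0 < ga ->
  (forall y y' d, Y y -> Y y' -> Rabs (f y - f y') <= d -> Rabs (y - y') <= K * Rpower d ga) ->
  H_null s (fun x => exists y, Y y /\ x = f y) -> H_null (s / ga) Y.
Proof.
  intros HK Hga Hholder Hnull eta eps Heta Heps.
  set (c := Rpower (2 * K) (s / ga)).
  assert (Hc : 0 < c) by apply exp_pos.
  set (eta' := Rpower (eta / (2 * K)) (/ ga)).
  destruct (Hnull eta' (eps / c) ltac:(apply exp_pos) ltac:(apply Rdiv_lt_0_compat; lra))
    as [a [b [Hab [Hcov Hsum]]]].
  set (y := fun i => epsilon (inhabits 0) (fun y => Y y /\ a i <= f y <= b i)).
  set (rho := fun i => K * Rpower (b i - a i) ga).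
  assert (Hrho : forall i, 0 < rho i) by (intros i; apply Rmult_lt_0_compat; [lra|apply exp_pos]).
  exists (fun i => y i - rho i), (fun i => y i + rho i).
  split; [|split].
  - intros i. specialize (Hrho i). split; [lra|].
    destruct (Hab i) as [Hlt Hle].
    assert (Hpow : Rpower (b i - a i) ga <= Rpower eta' ga) by (apply Rle_Rpower_l; lra).
    unfold eta' in Hpow.
    rewrite Rpower_mult, Rinv_l, Rpower_1 in Hpow by (try apply Rdiv_lt_0_compat; lra).
    unfold rho. apply (Rmult_le_compat_l (2 * K)) in Hpow; [|lra].
    replace (2 * K * (eta / (2 * K))) with eta in Hpow by (field; lra). lra.
  - intros y0 Hy0. destruct (Hcov (f y0) (ex_intro _ y0 (conj Hy0 eq_refl))) as [i Hi].
    exists i.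
    assert (Hyi : Y (y i) /\ a i <= f (y i) <= b i)
      by (apply epsilon_spec; exists y0; auto).
    apply Rabs_le_between'. apply Hholder; [exact Hy0|apply Hyi|].
    apply Rabs_le_between'. lra.
  - intros n.
    rewrite (sum_n_ext _ (fun i => mult c (Rpower (b i - a i) s)) n).
    + rewrite sum_n_mult_l. unfold mult. simpl.
      specialize (Hsum n). apply (Rmult_le_compat_l c) in Hsum; [|lra].
      replace (c * (eps / c)) with eps in Hsum by (field; lra). exact Hsum.
    + intros i. unfold rho, mult. simpl.
      replace (y i + K * Rpower (b i - a i) ga - (y i - K * Rpower (b i - a i) ga))
        with (2 * K * Rpower (b i - a i) ga) by ring.
      apply Rpower_scale_exp; [lra|destruct (Hab i); lra|lra].
Qed.

Lemma hdim_le_of_H_null E s : 0 <= s -> H_null s E -> Rbar_le (hdim E) s.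
Proof. intros Hs HE. apply (proj1 (Glb_Rbar_correct _)). split; assumption. Qed.

Lemma hdim_ge0 E : Rbar_le 0 (hdim E).
Proof. apply (proj2 (Glb_Rbar_correct _)). intros s [Hs _]. exact Hs. Qed.

Lemma hdim_lt_H_null E (t : R) : Rbar_lt (hdim E) t -> exists s, 0 <= s /\ H_null s E /\ s < t.
Proof.
  intros Hlt. apply NNPP. intros Hno. apply (Rbar_lt_not_le _ _ Hlt).
  apply (proj2 (Glb_Rbar_correct _)). intros s [Hs HE]. simpl.
  apply Rnot_lt_le. intros Hst. apply Hno. exists s. auto.
Qed.

Lemma hdim_le_scale (X Y : R -> Prop) ga c : 0 < ga -> / ga <= c ->
  (forall s, 0 <= s -> H_null s X -> H_null (s / ga) Y) ->
  Rbar_le (hdim Y) (Rbar_mult c (hdim X)).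
Proof.
  intros Hga Hc HXY.
  assert (Hc0 : 0 < c) by (pose proof (Rinv_0_lt_compat ga Hga); lra).
  assert (Hbound : forall t : R, Rbar_lt (hdim X) t -> Rbar_le (hdim Y) (c * t)).
  { intros t Ht. destruct (hdim_lt_H_null X t Ht) as [s [Hs [HX Hst]]].
    apply (Rbar_le_trans _ (s / ga)).
    - apply hdim_le_of_H_null; [apply Rdiv_le_0_compat|apply HXY]; auto.
    - simpl. unfold Rdiv. rewrite Rmult_comm. apply Rmult_le_compat; try lra.
      left; apply Rinv_0_lt_compat; lra. }
  pose proof (hdim_ge0 X) as HX0.
  destruct (hdim X) as [d| |] eqn:Ed; simpl in HX0; [|simpl|contradiction].
  - destruct (hdim Y) as [h| |] eqn:Eh; simpl; [|exfalso|trivial].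
    + apply Rle_plus_epsilon. intros e He.
      specialize (Hbound (d + e / c)). simpl in Hbound.
      replace (c * d + e) with (c * (d + e / c)) by (field; lra).
      apply Hbound. assert (0 < e / c) by (apply Rdiv_lt_0_compat; lra). lra.
    + specialize (Hbound (d + 1) ltac:(simpl; lra)). exact Hbound.
  - destruct (Rle_dec 0 c) as [Hc0'|]; [|lra].
    destruct (Rle_lt_or_eq_dec 0 c Hc0'); [|lra].
    destruct (hdim Y); exact I.
Qed.

(** * Bounds on Ubar and the choice of delta *)

Definition cons_digit (d : nat) (y : nat -> nat) : nat -> nat :=
  fun k => match k with O => d | S k' => y k' end.

Lemma digits_cons_digit M d y : (d <= M)%nat -> digits M y -> digits M (cons_digit d y).
Proof. intros Hd Hy [|k]; [exact Hd|apply Hy]. Qed.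

Lemma pi_cons_digit M u d y : 1 < u -> (d <= M)%nat -> digits M y ->
  pi u (cons_digit d y) = (INR d + pi u y) / u.
Proof.
  intros Hu Hd Hy.
  rewrite (pi_split M u Hu _ 1 (digits_cons_digit M d y Hd Hy)). change (pi u (shift 1 (cons_digit d y))) with (pi u y).
  simpl. field. lra.
Qed.

(* For 1 < u <= 3/2 the number 1 has the two expansions 0 a and 1 b, where a and b are the
   quasi-greedy expansions of u and u - 1. *)
Lemma U_gt_3_2 M u : (0 < M)%nat -> U M u -> 3 / 2 < u.
Proof.
  intros HM [[Hu1 HuM] [x [_ Huniq]]].
  apply Rnot_le_lt. intros Hu.
  assert (HM1 : 1 <= INR M) by (apply (le_INR 1); lia).
  assert (Hrep : forall z, 0 < z <= u -> pi u (qgreedy M u z) = z).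
  { intros z Hz. apply qgreedy_pi; try lra.
    apply (Rmult_le_reg_r (u - 1)); [lra|]. unfold Rdiv.
    rewrite Rmult_assoc, Rinv_l; nra. }
  assert (Hexp : forall d z, (d <= M)%nat -> 0 < z <= u -> INR d + z = u ->
            cons_digit d (qgreedy M u z) = x).
  { intros d z Hd Hz Hdz. apply Huniq; [apply digits_cons_digit, qgreedy_digits; exact Hd|].
    rewrite (pi_cons_digit M); [|lra|exact Hd|apply qgreedy_digits].
    rewrite Hrep, Hdz by exact Hz. field. lra. }
  assert (E0 : cons_digit 0 (qgreedy M u u) = x) by (apply Hexp; simpl; lra || lia).
  assert (E1 : cons_digit 1 (qgreedy M u (u - 1)) = x) by (apply Hexp; simpl; lra || lia).
  pose proof (f_equal (fun y => y O) (eq_trans E0 (eq_sym E1))) as Hfirst. simpl in Hfirst. lia.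
Qed.

Lemma Ubar_bounds M p : (0 < M)%nat -> Ubar M p -> 1 < p <= INR M + 1.
Proof.
  intros HM Hp. split.
  - apply Rnot_le_lt. intros Hle. destruct (Hp (3 / 2 - p)) as [u [Hu Hd]]; [lra|].
    pose proof (U_gt_3_2 M u HM Hu). apply Rabs_lt_between' in Hd. lra.
  - apply Rnot_lt_le. intros Hlt. destruct (Hp (p - (INR M + 1))) as [u [Hu Hd]]; [lra|].
    destruct Hu as [[_ HuM] _]. apply Rabs_lt_between' in Hd. lra.
Qed.

Lemma ln_le_ratio x y : 0 < x -> 0 < y -> ln x <= ln y + (x / y - 1).
Proof.
  intros Hx Hy. replace x with (y * (x / y)) at 1 by (field; lra).
  rewrite ln_mult by (try apply Rdiv_lt_0_compat; lra).
  assert (ln (x / y) <= x / y - 1); [|lra].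
  rewrite <- (ln_exp (x / y - 1)). apply ln_le; [apply Rdiv_lt_0_compat; lra|].
  pose proof (exp_ineq1_le (x / y - 1)). lra.
Qed.

Lemma ln_ratio_le q delta eps : 1 < q -> 0 < eps -> 0 < delta <= (q - 1) / 2 ->
  delta * (2 + eps) <= eps * ln q -> ln (q + delta) / ln (q - delta) <= 1 + eps.
Proof.
  intros Hq Heps Hdelta Hsmall.
  assert (Hls : 0 < ln (q - delta)) by (apply ln_gt_0; lra).
  assert (Hup : ln (q + delta) <= ln q + delta).
  { pose proof (ln_le_ratio (q + delta) q ltac:(lra) ltac:(lra)).
    assert ((q + delta) / q - 1 <= delta); [|lra].
    replace ((q + delta) / q - 1) with (delta / q) by (field; lra).
    apply (Rmult_le_reg_r q); [lra|]. unfold Rdiv. rewrite Rmult_assoc, Rinv_l; nra. }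
  assert (Hdown : ln q <= ln (q - delta) + delta).
  { pose proof (ln_le_ratio q (q - delta) ltac:(lra) ltac:(lra)).
    assert (q / (q - delta) - 1 <= delta); [|lra].
    replace (q / (q - delta) - 1) with (delta / (q - delta)) by (field; lra).
    apply (Rmult_le_reg_r (q - delta)); [lra|]. unfold Rdiv. rewrite Rmult_assoc, Rinv_l; nra. }
  apply (Rmult_le_reg_r (ln (q - delta))); [exact Hls|].
  unfold Rdiv. rewrite Rmult_assoc, Rinv_l by lra.
  assert (eps * ln q <= eps * (ln (q - delta) + delta)) by (apply Rmult_le_compat_l; lra).
  lra.
Qed.

Lemma exists_delta_ln_ratio_le q eps : 1 < q -> 0 < eps ->
  exists delta, 0 < delta <= (q - 1) / 2 /\ ln (q + delta) / ln (q - delta) <= 1 + eps.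
Proof.
  intros Hq Heps. pose proof (ln_gt_0 q Hq) as Hlnq.
  set (delta := Rmin ((q - 1) / 2) (eps * ln q / (2 + eps))).
  assert (Hdelta : 0 < delta <= (q - 1) / 2)
    by (split; [apply Rmin_glb_lt; [|apply Rdiv_lt_0_compat]; nra|apply Rmin_l]).
  exists delta. split; [exact Hdelta|]. apply ln_ratio_le; [exact Hq|exact Heps|exact Hdelta|].
  pose proof (Rmin_r ((q - 1) / 2) (eps * ln q / (2 + eps))) as Hmin.
  apply (Rmult_le_compat_r (2 + eps)) in Hmin; [|lra].
  replace (eps * ln q / (2 + eps) * (2 + eps)) with (eps * ln q) in Hmin by (field; lra).
  exact Hmin.
Qed.

Lemma H_null_Ubar_piece M q delta eta s : (0 < M)%nat -> 0 < delta -> 1 < q - delta -> 0 < eta ->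
  H_null s (pi_image (q + delta) (Udelta M delta q)) ->
  H_null (s / holder_exp (q - delta) (q + delta))
    (fun p => (Ubar M p /\ q - delta < p < q + delta) /\ p <= q + delta - eta).
Proof.
  intros HM Hdelta Hs0 Heta Hnull.
  assert (Hr : q - delta < q + delta) by lra.
  apply (H_null_of_inverse_holder _ (fun p => pi (q + delta) (alpha M p))
           (holder_const M (q - delta) (q + delta) eta));
    [apply holder_const_pos; assumption|apply holder_exp_pos; assumption| |].
  - intros p p' d [[Hp Ip] Hpr] [[Hp' Ip'] Hpr'] Hd.
    pose proof (Ubar_bounds M p HM Hp). pose proof (Ubar_bounds M p' HM Hp').
    apply (alpha_holder M (q - delta) (q + delta) HM Hs0 Hr); (lra || assumption).
  - refine (H_null_subset _ _ _ _ Hnull). intros x [p [[[Hp Ip] _] ->]].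
    pose proof (Ubar_bounds M p HM Hp).
    exists (alpha M p). split; [|reflexivity].
    exists p. split; [exact Hp|split; [exact Ip|apply alpha_quasi_greedy; lra]].
Qed.

Theorem lemma6p1 (M : nat) (HM : (0 < M)%nat) (q : R)
  (Hq : Ubar M q) (HqM : q <> INR M + 1) :
  forall eps : R, 0 < eps ->
    exists delta : R, 0 < delta /\
      Rbar_le (hdim (fun p => Ubar M p /\ q - delta < p < q + delta))
              (Rbar_mult (1 + eps)
                 (hdim (pi_image (q + delta) (Udelta M delta q)))).
Proof.
  intros eps Heps.
  destruct (Ubar_bounds M q HM Hq) as [Hq1 _].
  destruct (exists_delta_ln_ratio_le q eps Hq1 Heps) as [delta [Hdelta Hratio]].
  exists delta. split; [lra|].
  apply (hdim_le_scale _ _ (holder_exp (q - delta) (q + delta)));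
    [apply holder_exp_pos; lra|unfold holder_exp; rewrite Rinv_div; exact Hratio|].
  intros s _ Hnull.
  apply (H_null_countable_union _ (fun m p =>
           (Ubar M p /\ q - delta < p < q + delta) /\ p <= q + delta - / INR (S m))).
  - intros m. apply H_null_Ubar_piece; [exact HM|lra|lra| |exact Hnull].
    apply Rinv_0_lt_compat, lt_0_INR. lia.
  - intros p Yp. pose proof Yp as [_ [_ Hpr]].
    destruct (archimed_cor1 (q + delta - p)) as [n [Hn Hn0]]; [lra|].
    exists (n - 1)%nat. split; [exact Yp|]. replace (S (n - 1)) with n by lia. lra.
Qed.
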